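(* Let $\mathcal{H}_{A_1},\dots,\mathcal{H}_{A_n}$ be finite-dimensional Hilbert spaces, and for each $m$ let $X_{A_m}$ and $Y_{A_m}$ be orthonormal bases of $\mathcal{H}_{A_m}$. Let $X_{A_1\cdots A_n}$ and $Y_{A_1\cdots A_n}$ be the product bases of $\mathcal{H}_{A_1}\otimes\cdots\otimes\mathcal{H}_{A_n}$ consisting of all tensor products of elements of the $X_{A_m}$, respectively of the $Y_{A_m}$. Fix $\lambda,\mu>0$ and define $$c_{A_m}(\lambda,\mu)=\inf_{\rho}\big[\lambda H(X_{A_m}|\rho)+\mu H(Y_{A_m}|\rho)\big],$$ the infimum over density matrices on $\mathcal{H}_{A_m}$, and $$c_{A_1\cdots A_n}(\lambda,\mu)=\inf_{\rho}\big[\lambda H(X_{A_1\cdots A_n}|\rho)+\mu H(Y_{A_1\cdots A_n}|\rho)\big],$$ the infimum over density matrices on $\mathcal{H}_{A_1}\otimes\cdots\otimes\mathcal{H}_{A_n}$. Then $$c_{A_1\cdots A_n}(\lambda,\mu)=\sum_{m=1}^n c_{A_m}(\lambda,\mu).$$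
   Context: A density matrix is a positive semidefinite operator of trace one. For an orthonormal basis $X=\{e_i\}$ of a finite-dimensional Hilbert space and a density matrix $\rho$, the outcome distribution is $p_i=\langle e_i|\rho|e_i\rangle$ and $H(X|\rho):=-\sum_i p_i\log p_i$ (Shannon entropy, with $0\log 0=0$ and a fixed logarithm base $>1$). *)

From Stdlib Require Import Reals.
Open Scope R_scope.

Definition C : Type := (R * R)%type.
Definition C0 : C := (0, 0).
Definition C1 : C := (1, 0).
Definition Cadd (a b : C) : C := (fst a + fst b, snd a + snd b).
Definition Cmul (a b : C) : C :=
  (fst a * fst b - snd a * snd b, fst a * snd b + snd a * fst b).
Definition Cconj (a : C) : C := (fst a, - snd a).
Definition Re (a : C) : R := fst a.

Fixpoint Csum (d : nat) (f : nat -> C) : C :=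
  match d with O => C0 | S d' => Cadd (Csum d' f) (f d') end.
Fixpoint Rsum (d : nat) (f : nat -> R) : R :=
  match d with O => 0 | S d' => Rsum d' f + f d' end.
Fixpoint Cprod (n : nat) (f : nat -> C) : C :=
  match n with O => C1 | S n' => Cmul (Cprod n' f) (f n') end.
Fixpoint nprod (n : nat) (f : nat -> nat) : nat :=
  match n with O => 1%nat | S n' => (nprod n' f * f n')%nat end.

(** Vectors of C^d are [nat -> C] (coordinates 0..d-1 relevant);
    operators on C^d are matrices [nat -> nat -> C]. *)
Definition vec := nat -> C.
Definition mat := nat -> nat -> C.

Definition inner (d : nat) (u v : vec) : C :=
  Csum d (fun i => Cmul (Cconj (u i)) (v i)).
Definition sandwich (d : nat) (u : vec) (A : mat) (v : vec) : C :=
  Csum d (fun j => Csum d (fun k => Cmul (Cmul (Cconj (u j)) (A j k)) (v k))).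
Definition trace (d : nat) (A : mat) : C := Csum d (fun i => A i i).

Definition density (d : nat) (rho : mat) : Prop :=
  (forall i j, (i < d)%nat -> (j < d)%nat -> rho i j = Cconj (rho j i)) /\
  (forall v : vec, 0 <= Re (sandwich d v rho v)) /\
  trace d rho = C1.

(** orthonormal basis {e_0,...,e_(d-1)} of C^d (d orthonormal vectors in
    C^d form a basis) *)
Definition onbasis (d : nat) (e : nat -> vec) : Prop :=
  forall i j, (i < d)%nat -> (j < d)%nat ->
    inner d (e i) (e j) = if Nat.eq_dec i j then C1 else C0.

(** outcome distribution p_i = <e_i|rho|e_i> (real for rho Hermitian) *)
Definition outcome (d : nat) (e : nat -> vec) (rho : mat) (i : nat) : R :=
  Re (sandwich d (e i) rho (e i)).

Definition plogp (b p : R) : R :=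
  if Req_dec_T p 0 then 0 else p * (ln p / ln b).

Definition Hent (b : R) (d : nat) (e : nat -> vec) (rho : mat) : R :=
  - Rsum d (fun i => plogp b (outcome d e rho i)).

Definition cost_set (b lam mu : R) (d : nat) (X Y : nat -> vec) : R -> Prop :=
  fun v => exists rho, density d rho /\
           v = lam * Hent b d X rho + mu * Hent b d Y rho.

Definition is_inf (S : R -> Prop) (c : R) : Prop :=
  (forall v, S v -> c <= v) /\ (forall c', (forall v, S v -> c' <= v) -> c' <= c).

(** An index i < prod_m d m of the product space is identified with the tuple
    (i_0, ..., i_(n-1)) of mixed-radix digits i_m = (i / prod_(k<m) d k) mod d m. *)
Definition totdim (n : nat) (d : nat -> nat) : nat := nprod n d.
Definition digit (d : nat -> nat) (m i : nat) : nat :=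
  Nat.modulo (Nat.div i (nprod m d)) (d m).

(** product basis: element i is X_0(i_0) (x) ... (x) X_(n-1)(i_(n-1)),
    whose j-th coordinate is prod_m X_m(i_m)(j_m) *)
Definition prod_basis (n : nat) (d : nat -> nat) (X : nat -> nat -> vec) : nat -> vec :=
  fun i j => Cprod n (fun m => X m (digit d m i) (digit d m j)).

(* By induction on the number of factors it suffices to treat two factors A (x) B, with bases
   E, F of A and X, Y of B.  Tensor products of near-optimal states of A and B show that
   cA + cB is an upper bound.  For the lower bound, let rho be a state of A (x) B and write H(EX)
   for the entropy of its measurement in the product basis E (x) X and H(E) for that of its
   A-marginal in E.  Measuring E on A splits rho into unnormalised states of B, each of cost at
   least cB times its trace; by the chain rule for entropy,
     cB <= lam (H(EX) - H(E)) + mu (H(EY) - H(E)).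
   Measuring Y on B symmetrically gives cA <= lam (H(EY) - H(Y)) + mu (H(FY) - H(Y)), and the
   subadditivity H(EY) <= H(E) + H(Y) turns the sum of the two bounds into
   cA + cB <= lam H(EX) + mu H(FY). *)

From Stdlib Require Import Arith Reals Lra Lia Psatz Classical.
Open Scope R_scope.

Lemma C_ext (a b : C) : fst a = fst b -> snd a = snd b -> a = b.
Proof. destruct a, b; simpl; intros; subst; reflexivity. Qed.

Definition Copp (a : C) : C := (- fst a, - snd a).
Definition Csub (a b : C) : C := Cadd a (Copp b).

Lemma C_ring : ring_theory C0 C1 Cadd Cmul Csub Copp (@eq C).
Proof.
  constructor; intros; apply C_ext; unfold Csub, Copp, Cadd, Cmul, C0, C1; simpl; ring.
Qed.
Add Ring C_ring : C_ring.

Ltac Ccomp := apply C_ext; simpl; ring.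

Lemma Cconj_add a b : Cconj (Cadd a b) = Cadd (Cconj a) (Cconj b).
Proof. unfold Cconj, Cadd; Ccomp. Qed.
Lemma Cconj_mul a b : Cconj (Cmul a b) = Cmul (Cconj a) (Cconj b).
Proof. unfold Cconj, Cmul; Ccomp. Qed.
Lemma Cconj_opp a : Cconj (Copp a) = Copp (Cconj a).
Proof. unfold Cconj, Copp; Ccomp. Qed.
Lemma CconjK a : Cconj (Cconj a) = a.
Proof. unfold Cconj; Ccomp. Qed.
Lemma Cconj0 : Cconj C0 = C0.
Proof. unfold Cconj, C0; Ccomp. Qed.
Lemma Cconj1 : Cconj C1 = C1.
Proof. unfold Cconj, C1; Ccomp. Qed.

Definition RC (r : R) : C := (r, 0).
Lemma Cconj_RC r : Cconj (RC r) = RC r.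
Proof. unfold Cconj, RC; Ccomp. Qed.

Definition norm2 (z : C) : R := fst z * fst z + snd z * snd z.
Lemma norm2_ge0 z : 0 <= norm2 z.
Proof. unfold norm2; nra. Qed.
Lemma Cmul_conj_self z : Cmul (Cconj z) z = RC (norm2 z).
Proof. unfold Cmul, Cconj, RC, norm2; Ccomp. Qed.

Lemma Csum_ext d f g : (forall i, (i < d)%nat -> f i = g i) -> Csum d f = Csum d g.
Proof.
  induction d; intros H; simpl; auto.
  rewrite IHd, H by (auto || intros; apply H; lia). reflexivity.
Qed.
Lemma Rsum_ext d f g : (forall i, (i < d)%nat -> f i = g i) -> Rsum d f = Rsum d g.
Proof.
  induction d; intros H; simpl; auto.
  rewrite IHd, H by (auto || intros; apply H; lia). reflexivity.
Qed.

Lemma Csum_add d f g : Csum d (fun i => Cadd (f i) (g i)) = Cadd (Csum d f) (Csum d g).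
Proof. induction d; simpl; [Ccomp | rewrite IHd; ring]. Qed.
Lemma Rsum_add d f g : Rsum d (fun i => f i + g i) = Rsum d f + Rsum d g.
Proof. induction d; simpl; [ring | rewrite IHd; ring]. Qed.
Lemma Csum_opp d f : Csum d (fun i => Copp (f i)) = Copp (Csum d f).
Proof. induction d; simpl; [ring | rewrite IHd; ring]. Qed.
Lemma Rsum_opp d f : Rsum d (fun i => - f i) = - Rsum d f.
Proof. induction d; simpl; [ring | rewrite IHd; ring]. Qed.
Lemma Csum_mull d c f : Csum d (fun i => Cmul c (f i)) = Cmul c (Csum d f).
Proof. induction d; simpl; [ring | rewrite IHd; ring]. Qed.
Lemma Csum_mulr d c f : Csum d (fun i => Cmul (f i) c) = Cmul (Csum d f) c.
Proof. induction d; simpl; [ring | rewrite IHd; ring]. Qed.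
Lemma Rsum_mull d c f : Rsum d (fun i => c * f i) = c * Rsum d f.
Proof. induction d; simpl; [ring | rewrite IHd; ring]. Qed.
Lemma Rsum_mulr d c f : Rsum d (fun i => f i * c) = Rsum d f * c.
Proof. induction d; simpl; [ring | rewrite IHd; ring]. Qed.
Lemma Cconj_Csum d f : Cconj (Csum d f) = Csum d (fun i => Cconj (f i)).
Proof. induction d; simpl; [apply Cconj0 | rewrite Cconj_add, IHd; auto]. Qed.
Lemma fst_Csum d f : fst (Csum d f) = Rsum d (fun i => fst (f i)).
Proof. induction d; simpl; [|rewrite IHd]; auto. Qed.
Lemma snd_Csum d f : snd (Csum d f) = Rsum d (fun i => snd (f i)).
Proof. induction d; simpl; [|rewrite IHd]; auto. Qed.

Lemma Csum_eq0 d f : (forall i, (i < d)%nat -> f i = C0) -> Csum d f = C0.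
Proof. induction d; intros H; simpl; auto. rewrite IHd, H by (auto || intros; apply H; lia). ring. Qed.
Lemma Rsum_eq0 d f : (forall i, (i < d)%nat -> f i = 0) -> Rsum d f = 0.
Proof. induction d; intros H; simpl; auto. rewrite IHd, H by (auto || intros; apply H; lia). ring. Qed.

Lemma Csum_swap n m (f : nat -> nat -> C) :
  Csum n (fun i => Csum m (fun j => f i j)) = Csum m (fun j => Csum n (fun i => f i j)).
Proof.
  induction n; simpl; [symmetry; apply Csum_eq0; auto|].
  rewrite IHn, <- Csum_add. reflexivity.
Qed.
Lemma Rsum_swap n m (f : nat -> nat -> R) :
  Rsum n (fun i => Rsum m (fun j => f i j)) = Rsum m (fun j => Rsum n (fun i => f i j)).
Proof.
  induction n; simpl; [symmetry; apply Rsum_eq0; auto|].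
  rewrite IHn, <- Rsum_add. reflexivity.
Qed.

Lemma Csum_cat m k f : Csum (m + k) f = Cadd (Csum m f) (Csum k (fun a => f (m + a)%nat)).
Proof.
  induction k; simpl; [rewrite Nat.add_0_r; ring|].
  rewrite Nat.add_succ_r; simpl. rewrite IHk; ring.
Qed.
Lemma Rsum_cat m k f : Rsum (m + k) f = Rsum m f + Rsum k (fun a => f (m + a)%nat).
Proof.
  induction k; simpl; [rewrite Nat.add_0_r; ring|].
  rewrite Nat.add_succ_r; simpl. rewrite IHk; ring.
Qed.

Lemma Csum_blocks N d f :
  Csum (N * d) f = Csum d (fun l => Csum N (fun a => f (a + N * l)%nat)).
Proof.
  induction d; simpl; [rewrite Nat.mul_0_r; reflexivity|].
  rewrite Nat.mul_succ_r, Csum_cat, IHd. f_equal. apply Csum_ext; intros.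
  f_equal; lia.
Qed.
Lemma Rsum_blocks N d f :
  Rsum (N * d) f = Rsum d (fun l => Rsum N (fun a => f (a + N * l)%nat)).
Proof.
  induction d; simpl; [rewrite Nat.mul_0_r; reflexivity|].
  rewrite Nat.mul_succ_r, Rsum_cat, IHd. f_equal. apply Rsum_ext; intros.
  f_equal; lia.
Qed.

Definition delta (i j : nat) : C := if Nat.eq_dec i j then C1 else C0.

Lemma delta_sym i j : delta i j = delta j i.
Proof. unfold delta; do 2 destruct Nat.eq_dec; auto; lia. Qed.

Lemma Csum_delta d k f : (k < d)%nat -> Csum d (fun i => Cmul (f i) (delta i k)) = f k.
Proof.
  induction d; intros Hk; [lia|]. simpl. unfold delta at 2.
  destruct (Nat.eq_dec d k) as [->|].
  - rewrite Csum_eq0; [ring|]. intros i Hi. unfold delta; destruct Nat.eq_dec; [lia|ring].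
  - rewrite IHd by lia. ring.
Qed.

Lemma Rsum_le d f g : (forall i, (i < d)%nat -> f i <= g i) -> Rsum d f <= Rsum d g.
Proof.
  induction d; simpl; intros H; [lra|].
  pose proof (H d ltac:(lia)). pose proof (IHd ltac:(intros; apply H; lia)). lra.
Qed.
Lemma Rsum_ge0 d f : (forall i, (i < d)%nat -> 0 <= f i) -> 0 <= Rsum d f.
Proof. intros. rewrite <- (Rsum_eq0 d (fun _ => 0)) by auto. apply Rsum_le; auto. Qed.
Lemma Rsum_term_le d f k : (forall i, (i < d)%nat -> 0 <= f i) -> (k < d)%nat -> f k <= Rsum d f.
Proof.
  induction d; simpl; intros H Hk; [lia|].
  assert (0 <= Rsum d f) by (apply Rsum_ge0; intros; apply H; lia).
  destruct (Nat.eq_dec k d) as [->|]; [lra|].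
  pose proof (IHd ltac:(intros; apply H; lia) ltac:(lia)). pose proof (H d ltac:(lia)). lra.
Qed.
Lemma Rsum_ge0_eq0 d f : (forall i, (i < d)%nat -> 0 <= f i) -> Rsum d f = 0 ->
  forall k, (k < d)%nat -> f k = 0.
Proof. intros Hf Hs k Hk. pose proof (Rsum_term_le d f k Hf Hk). pose proof (Hf k Hk). lra. Qed.

(** * Inner products and orthonormal bases *)

Definition ind (k : nat) (x : C) : vec := fun i => if Nat.eq_dec i k then x else C0.
Definition vadd (u v : vec) : vec := fun i => Cadd (u i) (v i).
Definition vsub (u v : vec) : vec := fun i => Csub (u i) (v i).
Definition lincomb (d : nat) (c : nat -> C) (e : nat -> vec) : vec :=
  fun j => Csum d (fun i => Cmul (c i) (e i j)).

Lemma Csum_norm2 d f :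
  Csum d (fun i => Cmul (Cconj (f i)) (f i)) = RC (Rsum d (fun i => norm2 (f i))).
Proof.
  induction d; simpl; [unfold RC, C0; Ccomp|].
  rewrite IHd, Cmul_conj_self. unfold RC, Cadd; Ccomp.
Qed.

Lemma inner_self d v : inner d v v = RC (Rsum d (fun j => norm2 (v j))).
Proof. apply Csum_norm2. Qed.

Lemma Cconj_inner d u v : Cconj (inner d u v) = inner d v u.
Proof.
  unfold inner. rewrite Cconj_Csum. apply Csum_ext; intros.
  rewrite Cconj_mul, CconjK; ring.
Qed.

Lemma inner_vsub d u v :
  inner d (vsub u v) (vsub u v) =
  Csub (Csub (inner d u u) (inner d u v)) (Csub (inner d v u) (inner d v v)).
Proof.
  unfold inner, vsub, Csub.
  repeat (rewrite <- Csum_opp || rewrite <- Csum_add). apply Csum_ext; intros.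
  rewrite Cconj_add, Cconj_opp. ring.
Qed.

Lemma inner_ind_r d u k x : (k < d)%nat -> inner d u (ind k x) = Cmul (Cconj (u k)) x.
Proof.
  intros Hk. unfold inner. rewrite <- (Csum_delta d k (fun i => Cmul (Cconj (u i)) x)) by auto.
  apply Csum_ext; intros. unfold ind, delta. destruct Nat.eq_dec; ring.
Qed.

Lemma inner_lincomb_r D d u c e :
  inner D u (lincomb d c e) = Csum d (fun i => Cmul (c i) (inner D u (e i))).
Proof.
  unfold inner, lincomb.
  rewrite (Csum_ext D _ (fun j => Csum d (fun i => Cmul (c i) (Cmul (Cconj (u j)) (e i j))))).
  - rewrite Csum_swap. apply Csum_ext; intros. apply Csum_mull.
  - intros. rewrite <- Csum_mull. apply Csum_ext; intros; ring.
Qed.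

Lemma inner_lincomb_l D d u c e :
  inner D (lincomb d c e) u = Csum d (fun i => Cmul (Cconj (c i)) (inner D (e i) u)).
Proof.
  rewrite <- Cconj_inner, inner_lincomb_r, Cconj_Csum. apply Csum_ext; intros.
  rewrite Cconj_mul, Cconj_inner. reflexivity.
Qed.

Lemma onbasis_delta d e i j : onbasis d e -> (i < d)%nat -> (j < d)%nat ->
  inner d (e i) (e j) = delta i j.
Proof. intros He; apply He. Qed.

Lemma inner_onbasis_lincomb d e c i : onbasis d e -> (i < d)%nat ->
  inner d (e i) (lincomb d c e) = c i.
Proof.
  intros He Hi. rewrite inner_lincomb_r, <- (Csum_delta d i c) by auto.
  apply Csum_ext; intros. rewrite onbasis_delta, delta_sym by auto. reflexivity.
Qed.

Lemma bessel d e v : onbasis d e ->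
  Rsum d (fun i => norm2 (inner d (e i) v)) <= Rsum d (fun j => norm2 (v j)).
Proof.
  intros He.
  set (c := fun i => inner d (e i) v). set (s := lincomb d c e).
  set (S := Rsum d (fun i => norm2 (c i))).
  assert (Hsv : inner d s v = RC S).
  { unfold s, S. rewrite inner_lincomb_l. apply Csum_norm2. }
  assert (Hvs : inner d v s = RC S) by (rewrite <- Cconj_inner, Hsv; apply Cconj_RC).
  assert (Hss : inner d s s = RC S).
  { unfold s at 1, S. rewrite inner_lincomb_l, <- Csum_norm2.
    apply Csum_ext; intros. unfold s. rewrite inner_onbasis_lincomb; auto. }
  assert (Hw := inner_self d (vsub v s)).
  rewrite inner_vsub, Hsv, Hvs, Hss, inner_self in Hw.
  apply (f_equal fst) in Hw. unfold Csub, Copp, Cadd, RC in Hw; simpl in Hw.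
  pose proof (Rsum_ge0 d (fun j => norm2 (vsub v s j)) ltac:(intros; apply norm2_ge0)).
  change (S <= Rsum d (fun j => norm2 (v j))). lra.
Qed.

Lemma Rsum_norm2_ind d k x : (k < d)%nat -> Rsum d (fun i => norm2 (ind k x i)) = norm2 x.
Proof.
  intros Hk. pose proof (inner_self d (ind k x)) as H.
  rewrite inner_ind_r in H by auto. unfold ind in H at 1.
  destruct Nat.eq_dec; [|lia]. rewrite Cmul_conj_self in H.
  apply (f_equal fst) in H. simpl in H. lra.
Qed.

Lemma onbasis_col_norm d e j : onbasis d e -> (j < d)%nat ->
  Rsum d (fun i => norm2 (e i j)) = 1.
Proof.
  intros He Hj.
  assert (Hle : forall k, (k < d)%nat -> 0 <= 1 - Rsum d (fun i => norm2 (e i k))).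
  { intros k Hk. pose proof (bessel d e (ind k C1) He) as Hb.
    rewrite Rsum_norm2_ind in Hb by auto.
    rewrite (Rsum_ext _ _ (fun i => norm2 (e i k))) in Hb
      by (intros; rewrite inner_ind_r by auto; unfold norm2, Cmul, Cconj, C1; simpl; ring).
    replace (norm2 C1) with 1 in Hb by (unfold norm2, C1; simpl; ring). lra. }
  (* The rows have norm one, so the column norms, each at most one, sum to [d]. *)
  assert (Hrow : forall i, (i < d)%nat -> Rsum d (fun k => norm2 (e i k)) = 1).
  { intros i Hi. pose proof (inner_self d (e i)) as H. rewrite onbasis_delta in H by auto.
    apply (f_equal fst) in H. unfold delta in H. destruct Nat.eq_dec; [|lia]. simpl in H. lra. }
  assert (Hz : Rsum d (fun k => 1 - Rsum d (fun i => norm2 (e i k))) = 0).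
  { unfold Rminus. rewrite Rsum_add, Rsum_opp, <- Rsum_swap.
    rewrite (Rsum_ext d (fun i => Rsum d (fun k => norm2 (e i k))) (fun _ => 1)) by auto. ring. }
  pose proof (Rsum_ge0_eq0 d _ Hle Hz j Hj). lra.
Qed.

Lemma inner_vadd_r d u v w : inner d u (vadd v w) = Cadd (inner d u v) (inner d u w).
Proof. unfold inner, vadd. rewrite <- Csum_add. apply Csum_ext; intros; ring. Qed.

Lemma onbasis_complete d e j k : onbasis d e -> (j < d)%nat -> (k < d)%nat ->
  Csum d (fun i => Cmul (e i j) (Cconj (e i k))) = delta j k.
Proof.
  intros He Hj Hk. set (G := Csum d (fun i => Cmul (e i j) (Cconj (e i k)))).
  destruct (Nat.eq_dec j k) as [<-|Hjk].
  - unfold G, delta. destruct Nat.eq_dec; [|lia].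
    rewrite (Csum_ext d _ (fun i => Cmul (Cconj (e i j)) (e i j))) by (intros; ring).
    rewrite Csum_norm2, onbasis_col_norm by auto. reflexivity.
  - (* Bessel's inequality for [e_j + conj(G) e_k] forces [|G| = 0]. *)
    set (x := Cconj G). set (v := vadd (ind j C1) (ind k x)).
    pose proof (bessel d e v He) as Hb.
    rewrite (Rsum_ext d (fun i => norm2 (v i)) (fun i => norm2 (ind j C1 i) + norm2 (ind k x i))) in Hb
      by (intros; unfold v, vadd, ind; do 2 destruct Nat.eq_dec; subst; try lia;
          unfold norm2, Cadd, C0; simpl; ring).
    rewrite Rsum_add, !Rsum_norm2_ind in Hb by auto.
    rewrite (Rsum_ext d _ (fun i => norm2 (e i j) + norm2 x * norm2 (e i k)
                                    + 2 * fst (Cmul x (Cmul (e i j) (Cconj (e i k)))))) in Hb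
      by (intros; unfold v; rewrite inner_vadd_r, !inner_ind_r by auto;
          unfold norm2, Cadd, Cmul, Cconj, C1; simpl; ring).
    rewrite !Rsum_add, !Rsum_mull, !onbasis_col_norm, <- fst_Csum, Csum_mull in Hb by auto.
    fold G in Hb. unfold x in Hb. rewrite Cmul_conj_self in Hb. simpl in Hb.
    replace (norm2 C1) with 1 in Hb by (unfold norm2, C1; simpl; ring).
    assert (HG : norm2 G = 0) by (pose proof (norm2_ge0 G); lra).
    unfold delta; destruct Nat.eq_dec; [lia|].
    unfold norm2 in HG. apply C_ext; unfold C0; simpl; nra.
Qed.

Lemma trace_onbasis d e M : onbasis d e ->
  Csum d (fun i => sandwich d (e i) M (e i)) = trace d M.
Proof.
  intros He. unfold sandwich, trace.
  rewrite (Csum_ext _ _ (fun i => Csum d (fun j => Csum d (fun k =>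
             Cmul (M j k) (Cmul (e i k) (Cconj (e i j)))))))
    by (intros; apply Csum_ext; intros; apply Csum_ext; intros; ring).
  rewrite Csum_swap. apply Csum_ext; intros j Hj. rewrite Csum_swap.
  rewrite <- (Csum_delta d j (M j)) by auto. apply Csum_ext; intros k Hk.
  rewrite Csum_mull, onbasis_complete by auto. reflexivity.
Qed.

Lemma outcome_sum D e M : onbasis D e -> Rsum D (outcome D e M) = fst (trace D M).
Proof. intros He. unfold outcome, Re. rewrite <- fst_Csum, trace_onbasis by auto. reflexivity. Qed.

(** * Positive semidefinite matrices *)

Definition herm (d : nat) (M : mat) : Prop :=
  forall i j, (i < d)%nat -> (j < d)%nat -> M i j = Cconj (M j i).
Definition psd (d : nat) (M : mat) : Prop := forall v : vec, 0 <= Re (sandwich d v M v).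

Definition rank1 (z : vec) : mat := fun j k => Cmul (z j) (Cconj (z k)).
Definition gram (d : nat) (w : nat -> vec) : mat := fun j k => Csum d (fun t => rank1 (w t) j k).

Lemma sandwich_ext d u A B v : (forall j k, (j < d)%nat -> (k < d)%nat -> A j k = B j k) ->
  sandwich d u A v = sandwich d u B v.
Proof. intros H. unfold sandwich. apply Csum_ext; intros. apply Csum_ext; intros. rewrite H; auto. Qed.

Lemma sandwich_vadd_l d u u' M w :
  sandwich d (vadd u u') M w = Cadd (sandwich d u M w) (sandwich d u' M w).
Proof.
  unfold sandwich, vadd. rewrite <- Csum_add. apply Csum_ext; intros.
  rewrite <- Csum_add. apply Csum_ext; intros. rewrite Cconj_add. ring.
Qed.
Lemma sandwich_vadd_r d u M w w' :
  sandwich d u M (vadd w w') = Cadd (sandwich d u M w) (sandwich d u M w').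
Proof.
  unfold sandwich, vadd. rewrite <- Csum_add. apply Csum_ext; intros.
  rewrite <- Csum_add. apply Csum_ext; intros. ring.
Qed.
Lemma sandwich_sub_rank1 d u M z w :
  sandwich d u (fun j k => Csub (M j k) (rank1 z j k)) w =
  Csub (sandwich d u M w) (Cmul (inner d u z) (inner d z w)).
Proof.
  unfold sandwich, inner, rank1, Csub. rewrite <- Csum_mulr, <- Csum_opp, <- Csum_add.
  apply Csum_ext; intros. rewrite <- Csum_mull, <- Csum_opp, <- Csum_add.
  apply Csum_ext; intros. ring.
Qed.
Lemma sandwich_ind_l d k x M w : (k < d)%nat ->
  sandwich d (ind k x) M w = Cmul (Cconj x) (Csum d (fun l => Cmul (M k l) (w l))).
Proof.
  intros Hk. unfold sandwich.
  rewrite (Csum_ext _ _ (fun j => Cmul (Cmul (Cconj x) (Csum d (fun l => Cmul (M j l) (w l))))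
                                       (delta j k))); [apply Csum_delta; auto|].
  intros. unfold ind, delta. destruct Nat.eq_dec.
  - rewrite <- Csum_mull, <- Csum_mulr. apply Csum_ext; intros; ring.
  - rewrite Csum_eq0; [ring | intros; rewrite Cconj0; ring].
Qed.
Lemma sandwich_ind_r d k y u M : (k < d)%nat ->
  sandwich d u M (ind k y) = Cmul (Csum d (fun j => Cmul (Cconj (u j)) (M j k))) y.
Proof.
  intros Hk. unfold sandwich. rewrite <- Csum_mulr. apply Csum_ext; intros j Hj.
  rewrite <- (Csum_delta d k (fun l => Cmul (Cmul (Cconj (u j)) (M j l)) y)) by auto.
  apply Csum_ext; intros. unfold ind, delta. destruct Nat.eq_dec; ring.
Qed.
Lemma sandwich_ind_ind d j k x y M : (j < d)%nat -> (k < d)%nat ->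
  sandwich d (ind j x) M (ind k y) = Cmul (Cmul (Cconj x) (M j k)) y.
Proof.
  intros. rewrite sandwich_ind_l by auto.
  transitivity (Cmul (Cconj x) (Cmul (M j k) y)); [f_equal | ring].
  rewrite <- (Csum_delta d k (fun l => Cmul (M j l) y)) by auto.
  apply Csum_ext; intros. unfold ind, delta. destruct Nat.eq_dec; ring.
Qed.

Definition trunc (d : nat) (v : vec) : vec := fun i => if lt_dec i d then v i else C0.

Lemma sandwich_trunc d v M : sandwich (S d) (trunc d v) M (trunc d v) = sandwich d v M v.
Proof.
  assert (Hd : trunc d v d = C0) by (unfold trunc; destruct lt_dec; [lia|reflexivity]).
  unfold sandwich. simpl. rewrite Hd, Cconj0.
  rewrite (Csum_eq0 d (fun k => Cmul (Cmul C0 (M d k)) (trunc d v k))) by (intros; ring).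
  rewrite (Csum_ext d (fun j => Cadd _ _) (fun j => Csum d (fun k => Cmul (Cmul (Cconj (v j)) (M j k)) (v k)))).
  - ring.
  - intros j Hj. unfold trunc at 1 3. destruct lt_dec; [|lia].
    rewrite (Csum_ext d _ (fun k => Cmul (Cmul (Cconj (v j)) (M j k)) (v k))); [ring|].
    intros k Hk. unfold trunc. destruct lt_dec; [reflexivity|lia].
Qed.

Lemma psd_restrict d M : psd (S d) M -> psd d M.
Proof. intros H v. rewrite <- sandwich_trunc. apply H. Qed.

Lemma herm_diag_real d M k : herm d M -> (k < d)%nat -> snd (M k k) = 0.
Proof.
  intros H Hk. pose proof (f_equal snd (H k k Hk Hk)) as E.
  unfold Cconj in E; simpl in E. lra.
Qed.
Lemma psd_diag_ge0 d M k : psd d M -> (k < d)%nat -> 0 <= fst (M k k).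
Proof.
  intros H Hk. pose proof (H (ind k C1)) as E. rewrite sandwich_ind_ind in E by auto.
  unfold Re, Cmul, Cconj, C1 in E; simpl in E. lra.
Qed.

Lemma psd_zero_pivot_row d M : herm (S d) M -> psd (S d) M -> fst (M d d) = 0 ->
  forall k, (k < S d)%nat -> M d k = C0.
Proof.
  intros Hh Hp Hp0 k Hk.
  destruct (Nat.eq_dec k d) as [->|Hkd].
  { apply C_ext; [exact Hp0 | apply (herm_diag_real (S d)); auto]. }
  set (z := M d k). set (q := fst (M k k)). set (t := / (q + 1)).
  assert (Hq : 0 <= q) by (apply (psd_diag_ge0 (S d)); auto).
  assert (Ht : 0 < t) by (apply Rinv_0_lt_compat; lra).
  assert (Htq : t * q < 1) by (unfold t; apply (Rmult_lt_reg_r (q + 1)); [lra|]; field_simplify; lra).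
  (* The test vector [- t conj(z) e_k + e_d] gives [0 <= t |z|^2 (t q - 2)], while [t q < 1]. *)
  pose proof (Hp (vadd (ind k (Cmul (RC (- t)) (Cconj z))) (ind d C1))) as H.
  rewrite sandwich_vadd_l, !sandwich_vadd_r, !sandwich_ind_ind in H by lia.
  rewrite (Hh k d) in H by lia. fold z in H.
  pose proof (herm_diag_real (S d) M k Hh Hk) as Hkk.
  pose proof (herm_diag_real (S d) M d Hh ltac:(lia)) as Hdd.
  unfold Re, Cadd, Cmul, Cconj, C1, RC in H; simpl in H.
  rewrite Hkk, Hdd, Hp0 in H. fold q in H.
  assert (Hz : 0 <= norm2 z * (t * (t * q - 2))).
  { unfold norm2. eapply Rle_trans; [exact H | right; ring]. }
  assert (Hneg : t * (t * q - 2) < 0) by nra.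
  assert (norm2 z <= 0) by (pose proof (norm2_ge0 z); nra).
  unfold norm2 in *. apply C_ext; unfold C0; simpl; nra.
Qed.

(** The column of the Cholesky factor belonging to the last pivot [M d d]; it is the zero
    vector when the pivot vanishes, since [/ sqrt 0 = 0]. *)
Definition pivot_col (d : nat) (M : mat) : vec :=
  fun j => Cmul (RC (/ sqrt (fst (M d d)))) (M j d).

Lemma herm_sub_rank1 d M z : herm d M -> herm d (fun j k => Csub (M j k) (rank1 z j k)).
Proof.
  intros H i j Hi Hj. unfold rank1, Csub.
  rewrite Cconj_add, Cconj_opp, !Cconj_mul, CconjK, <- H by auto. ring.
Qed.

Definition schur (d : nat) (M : mat) : mat := fun j k => Csub (M j k) (rank1 (pivot_col d M) j k).

Lemma pivot_col_zero d M j : fst (M d d) = 0 -> pivot_col d M j = C0.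
Proof. intros H. unfold pivot_col. rewrite H, sqrt_0, Rinv_0. unfold RC, Cmul, C0; Ccomp. Qed.

Lemma schur_zero_pivot d M j k : fst (M d d) = 0 -> schur d M j k = M j k.
Proof. intros H. unfold schur, rank1. rewrite pivot_col_zero by auto. ring. Qed.

Lemma psd_schur_pos d M : herm (S d) M -> psd (S d) M -> 0 < fst (M d d) -> psd (S d) (schur d M).
Proof.
  intros Hh Hp Hpiv v. set (p := fst (M d d)) in *. set (z := pivot_col d M).
  set (s := inner (S d) z v).
  assert (Hsq : 0 < sqrt p) by (apply sqrt_lt_R0; lra).
  (* Testing [M] with [v - s / sqrt p e_d] gives exactly [v^* (M - z z^* ) v]. *)
  pose proof (Hp (vadd v (ind d (Cmul (RC (- / sqrt p)) s)))) as H.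
  rewrite sandwich_vadd_l, !sandwich_vadd_r, sandwich_ind_ind, sandwich_ind_l, sandwich_ind_r in H
    by lia.
  assert (E1 : Csum (S d) (fun l => Cmul (M d l) (v l)) = Cmul (RC (sqrt p)) s).
  { unfold s, inner, z, pivot_col. rewrite <- Csum_mull. apply Csum_ext; intros l Hl.
    rewrite Cconj_mul, Cconj_RC, <- (Hh d l) by lia. fold p.
    apply C_ext; unfold Cmul, RC; simpl; clearbody p; field; lra. }
  assert (E2 : Csum (S d) (fun j => Cmul (Cconj (v j)) (M j d)) = Cmul (RC (sqrt p)) (Cconj s)).
  { rewrite <- Cconj_RC, <- Cconj_mul, <- E1, Cconj_Csum. apply Csum_ext; intros l Hl.
    rewrite Cconj_mul, <- (Hh l d) by lia. ring. }
  assert (Ed : M d d = RC p) by (apply C_ext; [reflexivity | apply (herm_diag_real (S d)); auto]).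
  rewrite E1, E2, Ed in H.
  unfold schur. fold z. rewrite sandwich_sub_rank1, <- (Cconj_inner _ z v). fold s.
  assert (Hpa : p = sqrt p * sqrt p) by (symmetry; apply sqrt_sqrt; lra).
  set (Q := sandwich (S d) v M v) in *. set (a := sqrt p) in *.
  clearbody Q s a p. subst p.
  unfold Re, Csub, Cadd, Copp, Cmul, Cconj, RC in *; simpl in *.
  eapply Rle_trans; [exact H | right; field; lra].
Qed.

Lemma psd_schur d M : herm (S d) M -> psd (S d) M -> psd (S d) (schur d M).
Proof.
  intros Hh Hp. destruct (Rle_lt_or_eq_dec 0 (fst (M d d))) as [Hpos|Hzero].
  - apply (psd_diag_ge0 (S d)); auto.
  - apply psd_schur_pos; auto.
  - intros v. rewrite (sandwich_ext (S d) v _ M) by (intros; apply schur_zero_pivot; auto).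
    apply Hp.
Qed.

Lemma schur_last_row d M : herm (S d) M -> psd (S d) M ->
  forall k, (k < S d)%nat -> schur d M d k = C0.
Proof.
  intros Hh Hp k Hk. destruct (Rle_lt_or_eq_dec 0 (fst (M d d))) as [Hpos|Hzero].
  - apply (psd_diag_ge0 (S d)); auto.
  - pose proof (herm_diag_real (S d) M d Hh ltac:(lia)) as Him.
    unfold schur, rank1, pivot_col. rewrite Cconj_mul, Cconj_RC, <- (Hh d k) by lia.
    assert (Hsq : 0 < sqrt (fst (M d d))) by (apply sqrt_lt_R0; lra).
    pose proof (sqrt_sqrt (fst (M d d)) ltac:(lra)).
    set (a := sqrt (fst (M d d))) in *.
    apply C_ext; unfold Csub, Copp, Cadd, Cmul, RC, C0; simpl; rewrite Him, <- H; field; lra.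
  - rewrite schur_zero_pivot by auto. apply psd_zero_pivot_row; auto.
Qed.

Lemma psd_gram d M : herm d M -> psd d M ->
  exists w : nat -> vec, forall j k, (j < d)%nat -> (k < d)%nat -> M j k = gram d w j k.
Proof.
  revert M. induction d as [|d IH]; intros M Hh Hp.
  { exists (fun _ _ => C0). intros; lia. }
  set (z := pivot_col d M).
  assert (HhS : herm (S d) (schur d M)) by apply (herm_sub_rank1 (S d) M z Hh).
  assert (Hrow := schur_last_row d M Hh Hp).
  destruct (IH (schur d M)) as [w0 Hw0].
  { intros i j Hi Hj; apply HhS; lia. }
  { apply psd_restrict, psd_schur; auto. }
  exists (fun t j => if Nat.eq_dec t d then z j else if lt_dec j d then w0 t j else C0).
  intros j k Hj Hk. unfold gram. simpl. destruct Nat.eq_dec; [|lia].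
  transitivity (Cadd (schur d M j k) (rank1 z j k)); [unfold schur; fold z; ring | f_equal].
  destruct (lt_dec j d); [destruct (lt_dec k d)|].
  - rewrite Hw0 by auto. apply Csum_ext; intros t Ht. unfold rank1.
    destruct Nat.eq_dec; [lia|]. do 2 (destruct lt_dec; try lia). reflexivity.
  - replace k with d by lia. rewrite HhS, Hrow, Cconj0 by lia.
    symmetry; apply Csum_eq0; intros t Ht. unfold rank1.
    destruct Nat.eq_dec; [lia|]. destruct (lt_dec d d); [lia|]. rewrite Cconj0. ring.
  - replace j with d by lia. rewrite Hrow by lia.
    symmetry; apply Csum_eq0; intros t Ht. unfold rank1.
    destruct Nat.eq_dec; [lia|]. destruct (lt_dec d d); [lia|]. ring.
Qed.

(** * Shannon entropy *)

Lemma ln_0 : ln 0 = 0.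
Proof. unfold ln. destruct Rlt_dec as [H|]; [destruct (Rlt_irrefl 0 H) | reflexivity]. Qed.

Lemma plogp_ln b x : plogp b x = x * ln x / ln b.
Proof. unfold plogp. destruct Req_dec_T as [->|]; unfold Rdiv; ring. Qed.

Lemma plogp0 b : plogp b 0 = 0.
Proof. rewrite plogp_ln. unfold Rdiv; ring. Qed.

Lemma plogp_mul b x y : 0 <= x -> 0 <= y -> plogp b (x * y) = x * plogp b y + y * plogp b x.
Proof.
  intros Hx Hy. rewrite !plogp_ln.
  destruct (Req_dec_T x 0) as [->|Hx0]; [rewrite ln_0; unfold Rdiv; ring|].
  destruct (Req_dec_T y 0) as [->|Hy0]; [rewrite ln_0; unfold Rdiv; ring|].
  rewrite ln_mult by lra. unfold Rdiv; ring.
Qed.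

Lemma plogp_chain b d (P : nat -> R) : (forall i, (i < d)%nat -> 0 <= P i) ->
  Rsum d (fun i => plogp b (P i)) =
  plogp b (Rsum d P) + Rsum d P * Rsum d (fun i => plogp b (P i / Rsum d P)).
Proof.
  intros HP. set (s := Rsum d P).
  assert (Hs : 0 <= s) by (apply Rsum_ge0; auto).
  destruct (Req_dec_T s 0) as [E|E].
  - rewrite E, plogp0, Rmult_0_l, Rplus_0_l. apply Rsum_eq0. intros i Hi.
    rewrite (Rsum_ge0_eq0 d P HP E i Hi). apply plogp0.
  - rewrite (Rsum_ext _ _ (fun i => s * plogp b (P i / s) + (P i / s) * plogp b s)).
    + rewrite Rsum_add, Rsum_mull, Rsum_mulr. unfold Rdiv. rewrite Rsum_mulr. fold s.
      field; auto.
    + intros i Hi. rewrite <- plogp_mul; [f_equal; field; auto | lra |].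
      apply Rmult_le_pos; [auto | left; apply Rinv_0_lt_compat; lra].
Qed.

Lemma ln_le_sub1 x : 0 < x -> ln x <= x - 1.
Proof. intros Hx. pose proof (exp_ineq1_le (ln x)) as H. rewrite exp_ln in H by auto. lra. Qed.

Lemma gibbs_term p q r : 0 <= p -> p <= q -> p <= r ->
  p * ln q + p * ln r <= p * ln p + q * r - p.
Proof.
  intros Hp Hq Hr. destruct (Req_dec_T p 0) as [->|Hp0]; [nra|].
  assert (Hle := ln_le_sub1 (q * r / p) ltac:(apply Rdiv_lt_0_compat; nra)).
  unfold Rdiv in Hle. rewrite ln_mult, ln_Rinv, ln_mult in Hle by (try apply Rinv_0_lt_compat; nra).
  assert (H := Rmult_le_compat_l p _ _ Hp Hle).
  replace (p * (q * r * / p - 1)) with (q * r - p) in H by (field; lra). nra.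
Qed.

Lemma plogp_subadditive b N d (P : nat -> nat -> R) : 1 < b ->
  (forall a l, (a < N)%nat -> (l < d)%nat -> 0 <= P a l) ->
  Rsum N (fun a => Rsum d (P a)) = 1 ->
  Rsum N (fun a => plogp b (Rsum d (P a))) + Rsum d (fun l => plogp b (Rsum N (fun a => P a l)))
  <= Rsum N (fun a => Rsum d (fun l => plogp b (P a l))).
Proof.
  intros Hb HP H1.
  set (al := fun a => Rsum d (P a)). set (be := fun l => Rsum N (fun a => P a l)).
  assert (Hlnb : 0 < / ln b) by (apply Rinv_0_lt_compat; rewrite <- ln_1; apply ln_increasing; lra).
  assert (Hbe : Rsum d be = 1) by (unfold be; rewrite <- Rsum_swap; exact H1).
  (* Gibbs' inequality against the product of the marginals, term by term. *)
  assert (Hpt : forall a l, (a < N)%nat -> (l < d)%nat ->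
    P a l * ln (al a) + P a l * ln (be l) <= P a l * ln (P a l) + al a * be l - P a l).
  { intros a l Ha Hl. apply gibbs_term; auto.
    - apply (Rsum_term_le d (P a)); auto.
    - apply (Rsum_term_le N (fun a => P a l)); auto. }
  assert (Hsum := Rsum_le N _ _ (fun a Ha => Rsum_le d _ _ (fun l Hl => Hpt a l Ha Hl))).
  rewrite (Rsum_ext N (fun a => Rsum d (fun l => _ + _))
             (fun a => Rsum d (fun l => P a l * ln (al a)) + Rsum d (fun l => P a l * ln (be l))))
    in Hsum by (intros; apply Rsum_add).
  rewrite (Rsum_ext N (fun a => Rsum d (fun l => _ - _))
             (fun a => Rsum d (fun l => P a l * ln (P a l)) + (al a * Rsum d be - al a)))
    in Hsum by (intros; unfold Rminus; rewrite !Rsum_add, Rsum_opp, Rsum_mull; unfold al; ring).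
  rewrite !Rsum_add, Rsum_swap with (f := fun a l => P a l * ln (be l)), Hbe in Hsum.
  rewrite (Rsum_ext N (fun a => Rsum d (fun l => P a l * ln (al a))) (fun a => al a * ln (al a)))
    in Hsum by (intros; apply Rsum_mulr).
  rewrite (Rsum_ext d (fun l => Rsum N (fun a => P a l * ln (be l))) (fun l => be l * ln (be l)))
    in Hsum by (intros; apply Rsum_mulr).
  rewrite (Rsum_eq0 N (fun i => al i * 1 - al i)), Rplus_0_r in Hsum by (intros; ring).
  change (Rsum N (fun a => plogp b (al a)) + Rsum d (fun l => plogp b (be l))
          <= Rsum N (fun a => Rsum d (fun l => plogp b (P a l)))).
  rewrite (Rsum_ext N (fun a => plogp b (al a)) (fun a => al a * ln (al a) * / ln b))
    by (intros; apply plogp_ln).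
  rewrite (Rsum_ext d (fun l => plogp b (be l)) (fun l => be l * ln (be l) * / ln b))
    by (intros; apply plogp_ln).
  rewrite (Rsum_ext N (fun a => Rsum d _) (fun a => Rsum d (fun l => P a l * ln (P a l)) * / ln b))
    by (intros; rewrite <- Rsum_mulr; apply Rsum_ext; intros; apply plogp_ln).
  rewrite !Rsum_mulr, <- Rmult_plus_distr_r. apply Rmult_le_compat_r; lra.
Qed.

(** * Two-fold tensor products *)

Lemma idx_mod N a l : (a < N)%nat -> ((a + N * l) mod N = a)%nat.
Proof. intros. rewrite Nat.mul_comm, Nat.Div0.mod_add. apply Nat.mod_small; auto. Qed.
Lemma idx_div N a l : (a < N)%nat -> ((a + N * l) / N = l)%nat.
Proof. intros. rewrite Nat.mul_comm, Nat.div_add by lia. rewrite Nat.div_small; auto. Qed.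
Lemma idx_bound N d a l : (a < N)%nat -> (l < d)%nat -> (a + N * l < N * d)%nat.
Proof. intros. nia. Qed.

Definition kron (N : nat) (u w : vec) : vec := fun i => Cmul (u (i mod N)%nat) (w (i / N)%nat).
Definition kron_basis (N : nat) (E X : nat -> vec) : nat -> vec :=
  fun i => kron N (E (i mod N)%nat) (X (i / N)%nat).
Definition kron_mat (N : nat) (A B : mat) : mat :=
  fun i j => Cmul (A (i mod N)%nat (j mod N)%nat) (B (i / N)%nat (j / N)%nat).

Definition block (N : nat) (v : vec) (l : nat) : vec := fun j => v (j + N * l)%nat.
Definition mblock (N : nat) (M : mat) (l l' : nat) : mat :=
  fun j k => M (j + N * l)%nat (k + N * l')%nat.

(** [slice1 N u M] is [(<u| (x) 1) M (|u> (x) 1)], the unnormalised state of the second factor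
    after outcome [u] on the first; [slice2 N d w M] is the same with the roles exchanged. *)
Definition slice1 (N : nat) (u : vec) (M : mat) : mat :=
  fun l l' => sandwich N u (mblock N M l l') u.
Definition slice2 (N d : nat) (w : vec) (M : mat) : mat :=
  fun j k => sandwich d w (fun l l' => mblock N M l l' j k) w.

Lemma sandwich_blocks N d v M v' :
  sandwich (N * d) v M v' =
  Csum d (fun l => Csum d (fun l' => sandwich N (block N v l) (mblock N M l l') (block N v' l'))).
Proof.
  unfold sandwich at 1. rewrite Csum_blocks. apply Csum_ext; intros l Hl.
  rewrite (Csum_ext N _ (fun j => Csum d (fun l' => Csum N (fun k =>
             Cmul (Cmul (Cconj (v (j + N * l)%nat)) (M (j + N * l)%nat (k + N * l')%nat))
                  (v' (k + N * l')%nat)))))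
    by (intros; apply Csum_blocks).
  apply Csum_swap.
Qed.

Lemma Csum_swap22 n1 n2 n3 n4 (f : nat -> nat -> nat -> nat -> C) :
  Csum n1 (fun j => Csum n2 (fun k => Csum n3 (fun l => Csum n4 (fun l' => f j k l l')))) =
  Csum n3 (fun l => Csum n4 (fun l' => Csum n1 (fun j => Csum n2 (fun k => f j k l l')))).
Proof.
  rewrite (Csum_ext n1 _ (fun j => Csum n3 (fun l => Csum n4 (fun l' => Csum n2 (fun k =>
             f j k l l'))))).
  - rewrite Csum_swap. apply Csum_ext; intros. apply Csum_swap.
  - intros. rewrite Csum_swap. apply Csum_ext; intros. apply Csum_swap.
Qed.
Lemma sandwich_nested N d u w (F : nat -> nat -> mat) :
  sandwich N u (fun j k => sandwich d w (F j k) w) u =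
  sandwich d w (fun l l' => sandwich N u (fun j k => F j k l l') u) w.
Proof.
  set (G := fun j k l l' =>
         Cmul (Cmul (Cconj (u j)) (u k)) (Cmul (Cmul (Cconj (w l)) (w l')) (F j k l l'))).
  transitivity (Csum N (fun j => Csum N (fun k => Csum d (fun l => Csum d (fun l' => G j k l l'))))).
  2: rewrite Csum_swap22.
  all: unfold sandwich; apply Csum_ext; intros; apply Csum_ext; intros.
  all: rewrite <- Csum_mull, <- Csum_mulr; apply Csum_ext; intros.
  all: rewrite <- Csum_mull, <- Csum_mulr; apply Csum_ext; intros; unfold G; ring.
Qed.

Lemma Cconj_sandwich d u A v :
  Cconj (sandwich d u A v) = sandwich d v (fun j k => Cconj (A k j)) u.
Proof.
  unfold sandwich. rewrite Cconj_Csum, Csum_swap. apply Csum_ext; intros. rewrite Cconj_Csum.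
  apply Csum_ext; intros. rewrite !Cconj_mul, CconjK. ring.
Qed.

Lemma herm_sandwich_real d u M : herm d M -> snd (sandwich d u M u) = 0.
Proof.
  intros H. pose proof (Cconj_sandwich d u M u) as E.
  rewrite (sandwich_ext d u (fun j k => Cconj (M k j)) M) in E by (intros; symmetry; apply H; auto).
  apply (f_equal snd) in E. unfold Cconj in E; simpl in E. lra.
Qed.

Lemma sandwich_kron N d u w M :
  sandwich (N * d) (kron N u w) M (kron N u w) = sandwich d w (slice1 N u M) w.
Proof.
  rewrite sandwich_blocks. unfold slice1, sandwich at 2.
  apply Csum_ext; intros l Hl. apply Csum_ext; intros l' Hl'.
  unfold sandwich. rewrite <- Csum_mull, <- Csum_mulr. apply Csum_ext; intros j Hj.
  rewrite <- Csum_mull, <- Csum_mulr. apply Csum_ext; intros k Hk.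
  unfold block, kron. rewrite !idx_mod, !idx_div, Cconj_mul by auto. ring.
Qed.

Lemma sandwich_kron_slice2 N d u w M :
  sandwich (N * d) (kron N u w) M (kron N u w) = sandwich N u (slice2 N d w M) u.
Proof. rewrite sandwich_kron. unfold slice2. rewrite sandwich_nested. reflexivity. Qed.

Lemma herm_slice1 N d u M : herm (N * d) M -> herm d (slice1 N u M).
Proof.
  intros H l l' Hl Hl'. unfold slice1. rewrite Cconj_sandwich.
  apply sandwich_ext; intros. unfold mblock. apply H; apply idx_bound; auto.
Qed.
Lemma herm_slice2 N d w M : herm (N * d) M -> herm N (slice2 N d w M).
Proof.
  intros H j k Hj Hk. unfold slice2. rewrite Cconj_sandwich.
  apply sandwich_ext; intros. unfold mblock. apply H; apply idx_bound; auto.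
Qed.
Lemma psd_slice1 N d u M : psd (N * d) M -> psd d (slice1 N u M).
Proof. intros H w. rewrite <- sandwich_kron. apply H. Qed.
Lemma psd_slice2 N d w M : psd (N * d) M -> psd N (slice2 N d w M).
Proof. intros H u. rewrite <- sandwich_kron_slice2. apply H. Qed.

Lemma trace_slice1_sum N d E M : onbasis N E ->
  Csum N (fun a => trace d (slice1 N (E a) M)) = trace (N * d) M.
Proof.
  intros HE. unfold trace at 1, slice1. rewrite Csum_swap.
  unfold trace. rewrite Csum_blocks. apply Csum_ext; intros l Hl.
  apply (trace_onbasis N E (mblock N M l l)); auto.
Qed.

Lemma inner_kron N d u w u' w' :
  inner (N * d) (kron N u w) (kron N u' w') = Cmul (inner N u u') (inner d w w').
Proof.
  unfold inner. rewrite Csum_blocks, <- Csum_mull. apply Csum_ext; intros l Hl.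
  rewrite <- Csum_mulr. apply Csum_ext; intros a Ha. unfold kron.
  rewrite !idx_mod, !idx_div by auto. rewrite Cconj_mul. ring.
Qed.

Lemma onbasis_kron_basis N d E X : onbasis N E -> onbasis d X -> onbasis (N * d) (kron_basis N E X).
Proof.
  intros HE HX i j Hi Hj. unfold kron_basis. rewrite inner_kron.
  assert (HN : N <> 0%nat) by (intros ->; simpl in Hi; lia).
  assert (Hdiv : forall i, (i < N * d)%nat -> (i / N < d)%nat)
    by (intros; apply Nat.Div0.div_lt_upper_bound; lia).
  rewrite HE, HX by (apply Nat.mod_upper_bound || apply Hdiv; auto).
  pose proof (Nat.div_mod i N HN). pose proof (Nat.div_mod j N HN).
  do 3 destruct Nat.eq_dec; try ring; congruence.
Qed.

Lemma sandwich_scal_mat d x c A y :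
  sandwich d x (fun j k => Cmul c (A j k)) y = Cmul c (sandwich d x A y).
Proof.
  unfold sandwich. rewrite <- Csum_mull. apply Csum_ext; intros.
  rewrite <- Csum_mull. apply Csum_ext; intros. ring.
Qed.

Lemma sandwich_gram N x w y :
  sandwich N x (gram N w) y = Csum N (fun t => Cmul (Cconj (inner N (w t) x)) (inner N (w t) y)).
Proof.
  unfold sandwich, gram, rank1.
  rewrite (Csum_ext N _ (fun j => Csum N (fun t => Csum N (fun k =>
             Cmul (Cmul (Cconj (x j)) (w t j)) (Cmul (Cconj (w t k)) (y k)))))).
  - rewrite Csum_swap. apply Csum_ext; intros t Ht. unfold inner.
    rewrite Cconj_Csum, <- Csum_mulr. apply Csum_ext; intros j Hj.
    rewrite Cconj_mul, CconjK, <- Csum_mull. apply Csum_ext; intros; ring.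
  - intros j Hj. rewrite Csum_swap. apply Csum_ext; intros k Hk.
    rewrite <- Csum_mull, <- Csum_mulr. apply Csum_ext; intros; ring.
Qed.

Lemma mblock_kron_mat N A B l l' j k : (j < N)%nat -> (k < N)%nat ->
  mblock N (kron_mat N A B) l l' j k = Cmul (B l l') (A j k).
Proof. intros. unfold mblock, kron_mat. rewrite !idx_mod, !idx_div by auto. ring. Qed.

Lemma sandwich_kron_mat N d u w A B :
  sandwich (N * d) (kron N u w) (kron_mat N A B) (kron N u w) =
  Cmul (sandwich N u A u) (sandwich d w B w).
Proof.
  rewrite sandwich_kron, <- sandwich_scal_mat. apply sandwich_ext; intros l l' Hl Hl'.
  unfold slice1. rewrite (sandwich_ext N u _ (fun j k => Cmul (B l l') (A j k)))
    by (intros; apply mblock_kron_mat; auto).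
  rewrite sandwich_scal_mat. ring.
Qed.

(** Writing [A = sum_t w_t w_t^*], [v^* (A (x) B) v] is a sum of values [u_t^* B u_t]. *)
Lemma psd_kron_mat N d A B : herm N A -> psd N A -> psd d B -> psd (N * d) (kron_mat N A B).
Proof.
  intros HhA HpA HpB v. destruct (psd_gram N A HhA HpA) as [w Hw].
  set (u := fun t l => inner N (w t) (block N v l)).
  assert (E : sandwich (N * d) v (kron_mat N A B) v = Csum N (fun t => sandwich d (u t) B (u t))).
  { rewrite sandwich_blocks.
    rewrite (Csum_ext d _ (fun l => Csum N (fun t => Csum d (fun l' =>
               Cmul (Cmul (Cconj (u t l)) (B l l')) (u t l'))))).
    - rewrite Csum_swap. reflexivity.
    - intros l Hl. rewrite <- Csum_swap. apply Csum_ext; intros l' Hl'.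
      rewrite (sandwich_ext N _ _ (fun j k => Cmul (B l l') (gram N w j k)))
        by (intros; rewrite mblock_kron_mat, Hw; auto).
      rewrite sandwich_scal_mat, sandwich_gram, <- Csum_mull. apply Csum_ext; intros; unfold u; ring. }
  rewrite E. unfold Re. rewrite fst_Csum. apply Rsum_ge0; intros. apply HpB.
Qed.

Lemma density_kron_mat N d A B : density N A -> density d B -> density (N * d) (kron_mat N A B).
Proof.
  intros [HhA [HpA HtA]] [HhB [HpB HtB]]. split; [|split].
  - intros i j Hi Hj.
    assert (HN : N <> 0%nat) by (intros ->; simpl in Hi; lia).
    assert (Hdiv : forall i, (i < N * d)%nat -> (i / N < d)%nat)
      by (intros; apply Nat.Div0.div_lt_upper_bound; lia).
    unfold kron_mat. rewrite Cconj_mul, HhA, HhB by (apply Nat.mod_upper_bound || apply Hdiv; auto).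
    reflexivity.
  - apply psd_kron_mat; auto.
  - unfold trace. rewrite Csum_blocks.
    rewrite (Csum_ext d _ (fun l => Cmul (B l l) (Csum N (fun a => A a a)))).
    + rewrite Csum_mulr. fold (trace d B) (trace N A). rewrite HtA, HtB. ring.
    + intros l Hl. rewrite <- Csum_mull. apply Csum_ext; intros.
      apply (mblock_kron_mat N A B l l); auto.
Qed.

Lemma Hent_kron_basis b N d E X M :
  Hent b (N * d) (kron_basis N E X) M = Rsum N (fun a => Hent b d X (slice1 N (E a) M)).
Proof.
  unfold Hent. rewrite Rsum_opp, Rsum_blocks, Rsum_swap. f_equal.
  apply Rsum_ext; intros a Ha. apply Rsum_ext; intros l Hl.
  unfold outcome, kron_basis. rewrite idx_mod, idx_div, sandwich_kron by auto. reflexivity.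
Qed.

Lemma Hent_kron_basis_slice2 b N d E X M :
  Hent b (N * d) (kron_basis N E X) M = Rsum d (fun l => Hent b N E (slice2 N d (X l) M)).
Proof.
  unfold Hent. rewrite Rsum_opp, Rsum_blocks. f_equal.
  apply Rsum_ext; intros l Hl. apply Rsum_ext; intros a Ha.
  unfold outcome, kron_basis. rewrite idx_mod, idx_div, sandwich_kron_slice2 by auto. reflexivity.
Qed.

Lemma Hent_kron_mat b N d E X A B : onbasis N E -> onbasis d X -> density N A -> density d B ->
  Hent b (N * d) (kron_basis N E X) (kron_mat N A B) = Hent b N E A + Hent b d X B.
Proof.
  intros HE HX [HhA [HpA HtA]] [HhB [HpB HtB]].
  assert (Hout : forall a l, (a < N)%nat -> (l < d)%nat ->
    outcome (N * d) (kron_basis N E X) (kron_mat N A B) (a + N * l) =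
    outcome N E A a * outcome d X B l).
  { intros a l Ha Hl. unfold outcome, kron_basis.
    rewrite idx_mod, idx_div, sandwich_kron_mat by auto.
    unfold Re, Cmul; simpl. rewrite !herm_sandwich_real by auto. ring. }
  assert (SA := outcome_sum N E A HE). assert (SB := outcome_sum d X B HX).
  rewrite HtA in SA. rewrite HtB in SB. simpl in SA, SB.
  unfold Hent. rewrite Rsum_blocks, Rsum_swap.
  rewrite (Rsum_ext N _ (fun a => outcome N E A a * Rsum d (fun l => plogp b (outcome d X B l))
                                  + plogp b (outcome N E A a) * Rsum d (outcome d X B))).
  - rewrite Rsum_add, !Rsum_mulr, SA, SB. ring.
  - intros a Ha. rewrite <- !Rsum_mull, <- Rsum_add. apply Rsum_ext; intros l Hl.
    rewrite Hout, plogp_mul by (auto; apply HpA || apply HpB). ring.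
Qed.

Definition scale_mat (r : R) (M : mat) : mat := fun j k => Cmul (RC r) (M j k).

Lemma outcome_scale_mat D e r M i : outcome D e (scale_mat r M) i = r * outcome D e M i.
Proof. unfold outcome, scale_mat. rewrite sandwich_scal_mat. unfold Re, Cmul, RC; simpl. ring. Qed.

Lemma density_normalize D M : herm D M -> psd D M -> 0 < fst (trace D M) ->
  density D (scale_mat (/ fst (trace D M)) M).
Proof.
  intros Hh Hp Ht. split; [|split].
  - intros i j Hi Hj. unfold scale_mat. rewrite Cconj_mul, Cconj_RC, <- Hh; auto.
  - intros v. unfold scale_mat. rewrite sandwich_scal_mat. pose proof (Hp v).
    unfold Re, Cmul, RC in *; simpl. ring_simplify.
    apply Rmult_le_pos; [left; apply Rinv_0_lt_compat|]; auto.
  - unfold trace at 1, scale_mat. rewrite Csum_mull. fold (trace D M).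
    assert (Him : snd (trace D M) = 0)
      by (unfold trace; rewrite snd_Csum; apply Rsum_eq0; intros; eapply herm_diag_real; eauto).
    apply C_ext; unfold Cmul, RC, C1; simpl; rewrite Him; field; lra.
Qed.

(** Apply the bound to [M / t] and use the chain rule [- sum_i p_i log p_i = t H(p / t) - t log t]. *)
Lemma cost_lb_unnormalized b lam mu D e f c M : onbasis D e -> onbasis D f ->
  herm D M -> psd D M -> (forall v, cost_set b lam mu D e f v -> c <= v) ->
  c * fst (trace D M) <=
  lam * (Hent b D e M + plogp b (fst (trace D M))) + mu * (Hent b D f M + plogp b (fst (trace D M))).
Proof.
  intros He Hf Hh Hp Hc. set (t := fst (trace D M)).
  assert (Hchain : forall g, onbasis D g ->
    Hent b D g M + plogp b t = t * Hent b D g (scale_mat (/ t) M)).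
  { intros g Hg. unfold Hent.
    rewrite (plogp_chain b D (outcome D g M)), (outcome_sum D g M Hg) by (intros; apply Hp).
    rewrite (Rsum_ext D (fun i => plogp b (outcome D g (scale_mat (/ t) M) i))
                        (fun i => plogp b (outcome D g M i / t)))
      by (intros; rewrite outcome_scale_mat; unfold Rdiv; f_equal; ring).
    fold t. ring. }
  rewrite !Hchain by auto.
  assert (Ht : 0 <= t) by (unfold t; rewrite <- (outcome_sum D e) by auto;
                           apply Rsum_ge0; intros; apply Hp).
  destruct (Req_dec_T t 0) as [->|Ht0]; [lra|].
  replace (lam * (t * Hent b D e (scale_mat (/ t) M)) + mu * (t * Hent b D f (scale_mat (/ t) M)))
    with (t * (lam * Hent b D e (scale_mat (/ t) M) + mu * Hent b D f (scale_mat (/ t) M))) by ring.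
  rewrite Rmult_comm. apply Rmult_le_compat_l; [lra|].
  apply Hc. exists (scale_mat (/ t) M). split; [apply density_normalize; auto; fold t; lra | reflexivity].
Qed.

Lemma cost_lb_mixture b lam mu D K e f c (M : nat -> mat) : onbasis D e -> onbasis D f ->
  (forall a, (a < K)%nat -> herm D (M a)) -> (forall a, (a < K)%nat -> psd D (M a)) ->
  Rsum K (fun a => fst (trace D (M a))) = 1 ->
  (forall v, cost_set b lam mu D e f v -> c <= v) ->
  c <= lam * (Rsum K (fun a => Hent b D e (M a)) + Rsum K (fun a => plogp b (fst (trace D (M a)))))
       + mu * (Rsum K (fun a => Hent b D f (M a)) + Rsum K (fun a => plogp b (fst (trace D (M a))))).
Proof.
  intros He Hf Hh Hp Htr Hc.
  assert (H := Rsum_le K _ _ (fun a Ha =>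
                 cost_lb_unnormalized b lam mu D e f c (M a) He Hf (Hh a Ha) (Hp a Ha) Hc)).
  rewrite Rsum_mull, Htr, Rsum_add, !Rsum_mull, !Rsum_add in H. lra.
Qed.

Lemma cost_lb_kron b lam mu N d E F X Y cA cB rho : 1 < b -> 0 < lam -> 0 < mu ->
  onbasis N E -> onbasis N F -> onbasis d X -> onbasis d Y ->
  (forall v, cost_set b lam mu N E F v -> cA <= v) ->
  (forall v, cost_set b lam mu d X Y v -> cB <= v) ->
  density (N * d) rho ->
  cA + cB <= lam * Hent b (N * d) (kron_basis N E X) rho + mu * Hent b (N * d) (kron_basis N F Y) rho.
Proof.
  intros Hb Hlam Hmu HE HF HX HY HcA HcB [Hh [Hp Htr]].
  set (pA := fun a => fst (trace d (slice1 N (E a) rho))).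
  set (pB := fun l => fst (trace N (slice2 N d (Y l) rho))).
  set (P := fun a l => outcome d Y (slice1 N (E a) rho) l).
  assert (HrowP : forall a, (a < N)%nat -> Rsum d (P a) = pA a)
    by (intros; apply (outcome_sum d Y); auto).
  assert (HcolP : forall l, (l < d)%nat -> Rsum N (fun a => P a l) = pB l).
  { intros l Hl. unfold pB. rewrite <- (outcome_sum N E) by auto. apply Rsum_ext; intros a Ha.
    unfold P, outcome. rewrite <- sandwich_kron, sandwich_kron_slice2. reflexivity. }
  assert (HsA : Rsum N pA = 1).
  { unfold pA. rewrite <- fst_Csum, trace_slice1_sum, Htr by auto. reflexivity. }
  assert (HsB : Rsum d pB = 1).
  { rewrite <- (Rsum_ext d _ _ HcolP), <- Rsum_swap.
    rewrite (Rsum_ext N (fun a => Rsum d (fun l => P a l)) pA HrowP). exact HsA. }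
  assert (LB := cost_lb_mixture b lam mu d N X Y cB (fun a => slice1 N (E a) rho) HX HY
                  (fun a _ => herm_slice1 N d (E a) rho Hh) (fun a _ => psd_slice1 N d (E a) rho Hp)
                  HsA HcB).
  assert (LA := cost_lb_mixture b lam mu N d E F cA (fun l => slice2 N d (Y l) rho) HE HF
                  (fun l _ => herm_slice2 N d (Y l) rho Hh) (fun l _ => psd_slice2 N d (Y l) rho Hp)
                  HsB HcA).
  cbv beta in LB, LA.
  rewrite <- !Hent_kron_basis in LB. rewrite <- !Hent_kron_basis_slice2 in LA.
  assert (SUB : Rsum N (fun a => plogp b (fst (trace d (slice1 N (E a) rho))))
                + Rsum d (fun l => plogp b (fst (trace N (slice2 N d (Y l) rho))))
                <= - Hent b (N * d) (kron_basis N E Y) rho).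
  { rewrite Hent_kron_basis. unfold Hent. rewrite Rsum_opp, Ropp_involutive.
    assert (H := plogp_subadditive b N d P Hb (fun a l _ _ => psd_slice1 N d (E a) rho Hp (Y l))
                   ltac:(rewrite (Rsum_ext N _ pA HrowP); exact HsA)).
    rewrite (Rsum_ext N _ (fun a => plogp b (fst (trace d (slice1 N (E a) rho))))) in H
      by (intros; rewrite HrowP; auto).
    rewrite (Rsum_ext d _ (fun l => plogp b (fst (trace N (slice2 N d (Y l) rho))))) in H
      by (intros; rewrite HcolP; auto).
    exact H. }
  nra.
Qed.

Lemma is_inf_approx S c eps : is_inf S c -> 0 < eps -> exists v, S v /\ v < c + eps.
Proof.
  intros [_ Hglb] Heps. apply NNPP. intros Hno.
  assert (c + eps <= c); [|lra].
  apply Hglb. intros v Hv. apply Rnot_lt_le. intros Hlt. apply Hno. eauto.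
Qed.

Lemma is_inf_cost_kron b lam mu N d E F X Y cA cB : 1 < b -> 0 < lam -> 0 < mu ->
  onbasis N E -> onbasis N F -> onbasis d X -> onbasis d Y ->
  is_inf (cost_set b lam mu N E F) cA -> is_inf (cost_set b lam mu d X Y) cB ->
  is_inf (cost_set b lam mu (N * d) (kron_basis N E X) (kron_basis N F Y)) (cA + cB).
Proof.
  intros Hb Hlam Hmu HE HF HX HY HA HB. split.
  - intros v [rho [Hrho ->]]. apply cost_lb_kron; auto; [apply HA | apply HB].
  - intros c' Hc'. apply Rnot_lt_le. intros Hlt.
    set (eps := (c' - (cA + cB)) / 2).
    assert (Heps : 0 < eps) by (unfold eps; lra).
    destruct (is_inf_approx _ _ eps HA Heps) as [vA [[rA [HrA ->]] HvA]].
    destruct (is_inf_approx _ _ eps HB Heps) as [vB [[rB [HrB ->]] HvB]].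
    assert (Hprod := Hc' _ (ex_intro _ (kron_mat N rA rB)
                              (conj (density_kron_mat N d rA rB HrA HrB) eq_refl))).
    rewrite !Hent_kron_mat in Hprod by auto. unfold eps in *. lra.
Qed.

(** * Arbitrary finite products *)

Lemma nprod_factor d m n : (m < n)%nat -> exists K, nprod n d = (nprod m d * d m * K)%nat.
Proof.
  induction n; intros H; [lia|]. simpl. destruct (Nat.eq_dec m n) as [->|].
  - exists 1%nat. lia.
  - destruct IHn as [K HK]; [lia|]. exists (K * d n)%nat. rewrite HK. lia.
Qed.

Lemma digit_mod d m n i : (m < n)%nat -> nprod n d <> 0%nat ->
  digit d m i = digit d m (i mod nprod n d).
Proof.
  intros Hm HN. destruct (nprod_factor d m n Hm) as [K HK]. unfold digit.
  set (N := nprod n d) in *. set (P := nprod m d) in *. set (D := d m) in *.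
  assert (HP : P <> 0%nat) by (intros E0; rewrite E0 in HK; simpl in HK; lia).
  assert (E1 : (i / P = D * K * (i / N) + (i mod N) / P)%nat).
  { rewrite <- Nat.div_add_l by auto. f_equal.
    rewrite (Nat.div_mod i N HN) at 1. rewrite HK at 1. ring. }
  rewrite E1, Nat.add_comm.
  replace (D * K * (i / N))%nat with ((K * (i / N)) * D)%nat by ring.
  apply Nat.Div0.mod_add.
Qed.

Lemma digit_last d n i : (i < nprod n d * d n)%nat -> digit d n i = (i / nprod n d)%nat.
Proof.
  intros H. unfold digit. apply Nat.mod_small.
  assert (nprod n d <> 0%nat) by (intros E0; rewrite E0 in H; simpl in H; lia).
  apply Nat.Div0.div_lt_upper_bound. lia.
Qed.

Lemma Cprod_ext n f g : (forall m, (m < n)%nat -> f m = g m) -> Cprod n f = Cprod n g.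
Proof.
  induction n; intros H; simpl; auto.
  rewrite IHn, H by (auto || intros; apply H; lia). reflexivity.
Qed.

Lemma prod_basis_succ n d X i j : (i < totdim (S n) d)%nat -> (j < totdim (S n) d)%nat ->
  prod_basis (S n) d X i j = kron_basis (totdim n d) (prod_basis n d X) (X n) i j.
Proof.
  unfold totdim. simpl. intros Hi Hj.
  assert (HN : nprod n d <> 0%nat) by (intros E0; rewrite E0 in Hi; simpl in Hi; lia).
  unfold prod_basis, kron_basis, kron. simpl. f_equal.
  - apply Cprod_ext; intros m Hm. rewrite <- !(digit_mod d m n) by auto. reflexivity.
  - rewrite !digit_last by auto. reflexivity.
Qed.

Lemma onbasis_ext D e e' : (forall i j, (i < D)%nat -> (j < D)%nat -> e i j = e' i j) ->
  onbasis D e -> onbasis D e'.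
Proof.
  intros H He i j Hi Hj. rewrite <- (He i j Hi Hj). unfold inner.
  apply Csum_ext; intros. rewrite !H; auto.
Qed.

Lemma Hent_ext b D e e' M : (forall i j, (i < D)%nat -> (j < D)%nat -> e i j = e' i j) ->
  Hent b D e M = Hent b D e' M.
Proof.
  intros H. unfold Hent, outcome. f_equal. apply Rsum_ext; intros i Hi.
  do 2 f_equal. unfold sandwich. apply Csum_ext; intros. apply Csum_ext; intros. rewrite !H; auto.
Qed.

Lemma is_inf_cost_ext b lam mu D e f e' f' c :
  (forall i j, (i < D)%nat -> (j < D)%nat -> e i j = e' i j) ->
  (forall i j, (i < D)%nat -> (j < D)%nat -> f i j = f' i j) ->
  is_inf (cost_set b lam mu D e f) c -> is_inf (cost_set b lam mu D e' f') c.
Proof.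
  intros He Hf Hinf. enough (Hset : forall v, cost_set b lam mu D e f v <-> cost_set b lam mu D e' f' v).
  { destruct Hinf as [H1 H2]. split.
    - intros v Hv. apply H1, Hset, Hv.
    - intros c' Hc'. apply H2. intros v Hv. apply Hc', Hset, Hv. }
  intros v. split; intros [rho [Hrho ->]]; exists rho; split; auto;
    rewrite (Hent_ext b D e e' rho), (Hent_ext b D f f' rho); auto.
Qed.

Lemma onbasis_one : onbasis 1 (fun _ _ => C1).
Proof.
  intros i j Hi Hj. replace i with 0%nat by lia. replace j with 0%nat by lia.
  unfold inner, delta. simpl. unfold Cadd, Cmul, Cconj, C0, C1; Ccomp.
Qed.

Lemma is_inf_cost_one b lam mu : is_inf (cost_set b lam mu 1 (fun _ _ => C1) (fun _ _ => C1)) 0.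
Proof.
  assert (Hzero : forall rho, density 1 rho -> Hent b 1 (fun _ _ => C1) rho = 0).
  { intros rho [_ [_ Htr]].
    assert (Hr : rho 0%nat 0%nat = C1) by (rewrite <- Htr; unfold trace; simpl; unfold Cadd, C0; Ccomp).
    assert (Ho : outcome 1 (fun _ _ => C1) rho 0 = 1)
      by (unfold outcome, sandwich; simpl; rewrite Hr; unfold Re, Cadd, Cmul, Cconj, C0, C1; simpl; ring).
    unfold Hent; simpl. rewrite Ho, plogp_ln, ln_1. unfold Rdiv; ring. }
  assert (Hdens : density 1 (fun _ _ => C1)).
  { split; [|split].
    - intros; rewrite Cconj1; reflexivity.
    - intros v. unfold sandwich, Re. simpl. unfold Cadd, Cmul, Cconj, C0, C1; simpl. nra.
    - unfold trace; simpl. unfold Cadd, C0, C1; Ccomp. }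
  split.
  - intros v [rho [Hrho ->]]. rewrite Hzero by auto. lra.
  - intros c' Hc'. apply (Rle_trans _ _ _ (Hc' _ (ex_intro _ _ (conj Hdens eq_refl)))).
    rewrite Hzero by auto. lra.
Qed.

Lemma onbasis_prod_basis n d X : (forall m, (m < n)%nat -> onbasis (d m) (X m)) ->
  onbasis (totdim n d) (prod_basis n d X).
Proof.
  induction n as [|n IH]; intros HX; [exact onbasis_one|].
  apply (onbasis_ext _ (kron_basis (totdim n d) (prod_basis n d X) (X n))).
  - intros; symmetry; apply prod_basis_succ; auto.
  - apply onbasis_kron_basis; auto.
Qed.

Theorem mainTheorem2 (b : R) (hb : 1 < b) (lam mu : R) (hlam : 0 < lam) (hmu : 0 < mu)
  (n : nat) (d : nat -> nat) (X Y : nat -> nat -> vec)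
  (hX : forall m, (m < n)%nat -> onbasis (d m) (X m))
  (hY : forall m, (m < n)%nat -> onbasis (d m) (Y m))
  (c : nat -> R)
  (hc : forall m, (m < n)%nat -> is_inf (cost_set b lam mu (d m) (X m) (Y m)) (c m)) :
  is_inf (cost_set b lam mu (totdim n d) (prod_basis n d X) (prod_basis n d Y))
         (Rsum n c).
Proof.
  induction n as [|n IH]; [exact (is_inf_cost_one b lam mu)|].
  apply (is_inf_cost_ext _ _ _ _ (kron_basis (totdim n d) (prod_basis n d X) (X n))
                                 (kron_basis (totdim n d) (prod_basis n d Y) (Y n)));
    try (intros; symmetry; apply prod_basis_succ; auto).
  apply is_inf_cost_kron; auto using onbasis_prod_basis.
Qed.
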